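(* Let $p$ be a prime and let $B\subset\mathbf{Z}/p\mathbf{Z}$ be a balanced set. Then there exists $g\in -B$ such that $\Sigma(B+g)=\mathbf{Z}/p\mathbf{Z}$.
   Context: A subset $B$ of an abelian group is balanced if for every $b\in B$ there exist distinct $b_1,b_2\in B$ with $2b=b_1+b_2$. For a finite set $S$, $\Sigma(S)=\{\sum_{s\in S'}s: S'\subseteq S\}$ is the set of subset sums. Also $-B=\{-b:b\in B\}$ and $B+g=\{b+g:b\in B\}$. *)

From mathcomp Require Import all_boot all_algebra.
Set Implicit Arguments. Unset Strict Implicit. Unset Printing Implicit Defensive.
Import GRing.Theory.
Local Open Scope ring_scope.

Definition balanced (G : finZmodType) (B : {set G}) : Prop :=
  forall b, b \in B -> exists b1 b2, [/\ b1 \in B, b2 \in B, b1 != b2 & b *+ 2 = b1 + b2].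

Definition subset_sums (G : finZmodType) (S : {set G}) : {set G} :=
  [set \sum_(s in S') s | S' : {set G} in powerset S].

Definition setN (G : finZmodType) (B : {set G}) : {set G} := [set - b | b in B].
Definition setTr (G : finZmodType) (B : {set G}) (g : G) : {set G} := [set b + g | b in B].

From mathcomp Require Import all_boot all_algebra.
From mathcomp Require Import zify.
Set Implicit Arguments. Unset Strict Implicit. Unset Printing Implicit Defensive.
Import GRing.Theory.
Local Open Scope ring_scope.

(* Fix b0 in a balanced set C and let the closure of b0 be the least set that
   contains b0 and every x with 2x = x1 + x2 for some x1 in C already in it and
   some x2 in C.  The part of C outside the closure is again balanced, so by
   induction on #|C| we may assume C lies in the closure.  Then for X a subset
   of C and y in C, the sum of (X - b0) plus y - b0 is again such a subset sum:
   if y is already in X, trade the two copies of y for y1 + y2 with y1 closer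
   to b0 in the closure, and iterate; a weight that drops with every trade
   makes this terminate.  So every multiple of a - b0, for a <> b0 in C, is a
   subset sum of C - b0, and in Z/pZ these multiples are everything. *)

Section AverageClosure.
Variables (G : finZmodType) (C : {set G}) (b0 : G).

Definition avg_step (S : {set G}) : {set G} :=
  b0 |: [set x | [exists x1 in C :&: S, exists x2 in C, x *+ 2 == x1 + x2]].

Lemma avg_step_mono : {homo avg_step : X Y / X \subset Y}.
Proof.
move=> X Y sXY; apply/setUS/subsetP => x; rewrite !inE.
case/exists_inP => x1; rewrite inE => /andP[x1C x1X] ex2.
by apply/exists_inP; exists x1; rewrite // inE x1C (subsetP sXY).
Qed.

Definition avg_closure := fixset avg_step.
Definition depth (x : G) := fix_order avg_step x.

Lemma avg_closure_base : b0 \in avg_closure.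
Proof. by rewrite /avg_closure -(fixsetK avg_step_mono) setU11. Qed.

Lemma avg_closure_closed x x1 x2 : x1 \in C :&: avg_closure -> x2 \in C ->
  x *+ 2 = x1 + x2 -> x \in avg_closure.
Proof.
move=> x1CS x2C ex; rewrite /avg_closure -(fixsetK avg_step_mono) !inE.
apply/orP; right; apply/exists_inP; exists x1 => //.
by apply/exists_inP; exists x2; rewrite ?ex.
Qed.

Lemma avg_closure_descent x : x \in avg_closure -> x != b0 ->
  exists x1 x2, [/\ x1 \in C, x2 \in C, x *+ 2 = x1 + x2 & (depth x1 < depth x)%N].
Proof.
rewrite /avg_closure /depth => xS /negPf xb0.
have := fix_order_gt0 avg_step x; rewrite xS; move: xS; rewrite -in_iter_fix_orderE.
case: (fix_order avg_step x) => [|k] //= + _.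
rewrite !inE xb0 /= => /exists_inP[x1 /setIP[x1C x1k] /exists_inP[x2 x2C /eqP ex]].
by exists x1, x2; split; rewrite // ltnS (fix_order_small avg_step_mono).
Qed.

Definition weight (x : G) : nat := 2 ^ #|G| - 2 ^ (#|G| - depth x).

Lemma weight_descent x x1 x2 : (depth x1 < depth x)%N ->
  (weight x1 + weight x2 < 2 * weight x)%N.
Proof.
rewrite /weight => lt_x1x; have := fix_order_le_max avg_step x; rewrite -/(depth x).
move: (depth x) lt_x1x => d lt_x1d le_dG; set N := #|G| in le_dG *.
have le_pow k : (2 ^ (N - k) <= 2 ^ N)%N by rewrite leq_pexp2l ?leq_subr.
have pow_x1 : (2 ^ (N - d) * 2 <= 2 ^ (N - depth x1))%N.
  by rewrite -expnSr leq_pexp2l //; lia.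
have := le_pow d; have := le_pow (depth x1); have := le_pow (depth x2).
have : (0 < 2 ^ (N - depth x2))%N by rewrite expn_gt0.
lia.
Qed.

Definition shifted_sum (X : {set G}) : G := \sum_(x in X) (x - b0).
Definition set_weight (X : {set G}) : nat := \sum_(x in X) weight x.

Hypothesis C_avg_closed : C \subset avg_closure.

(* The weight bound in the conclusion is what lets the second induction
   hypothesis apply to the output of the first. *)
Lemma shifted_sum_shift (X : {set G}) y : X \subset C -> y \in C ->
  exists2 Z : {set G}, Z \subset C & shifted_sum Z = shifted_sum X + (y - b0) /\
                           (set_weight Z <= set_weight X + weight y)%N.
Proof.
have [n] := ubnP (set_weight X + weight y)%N.
elim: n => // n IH in X y *; rewrite ltnS => lt_n sXC yC.
have [-> | yb0] := eqVneq y b0; first by exists X; rewrite ?subrr ?addr0 ?leq_addr.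
have [yX | yNX] := boolP (y \in X); last first.
  exists (y |: X); first by rewrite subUset sub1set yC.
  by rewrite /shifted_sum /set_weight !big_setU1 //= addrC addnC.
have [y1 [y2 [y1C y2C ey lt_y1y]]] := avg_closure_descent (subsetP C_avg_closed y yC) yb0.
have lt_wt := weight_descent y2 lt_y1y.
have sX : shifted_sum X = (y - b0) + shifted_sum (X :\ y) by exact: big_setD1.
have wX : set_weight X = (weight y + set_weight (X :\ y))%N by exact: big_setD1.
have sX'C : X :\ y \subset C by rewrite (subset_trans (subsetDl _ _)).
have [|Z1 sZ1C [eZ1 wZ1]] := IH (X :\ y) y2 _ sX'C y2C; first by lia.
have [|Z sZC [eZ wZ]] := IH Z1 y1 _ sZ1C y1C; first by lia.
exists Z => //; split; last by lia.
have e2 : (y2 - b0) + (y1 - b0) = (y - b0) *+ 2.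
  by rewrite mulrnBl ey mulr2n opprD addrACA (addrC y2).
by rewrite eZ eZ1 sX -[LHS]addrA e2 mulr2n addrA [(y - b0) + _]addrC.
Qed.

Lemma shifted_sum_mulrn y k : y \in C ->
  exists2 Z : {set G}, Z \subset C & shifted_sum Z = (y - b0) *+ k.
Proof.
move=> yC; elim: k => [|k [X sXC eX]].
  by exists set0; rewrite ?sub0set // /shifted_sum big_set0.
have [Z sZC [eZ _]] := shifted_sum_shift sXC yC.
by exists Z; rewrite // eZ eX mulrSr.
Qed.

End AverageClosure.

Lemma balanced_setD_avg_closure (G : finZmodType) (C : {set G}) (b0 : G) :
  balanced C -> balanced (C :\: avg_closure C b0).
Proof.
move=> balC x /setDP[xC xNS]; have [b1 [b2 [b1C b2C b12 ex]]] := balC x xC.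
have notin_closure y1 y2 : y1 \in C -> y2 \in C -> x *+ 2 = y1 + y2 ->
    y1 \notin avg_closure C b0.
  move=> y1C y2C ey; apply: contra xNS => y1S.
  by apply: (avg_closure_closed _ y2C ey); rewrite inE y1C.
exists b1, b2; split; rewrite // inE ?b1C ?b2C andbT.
  exact: notin_closure ex.
by apply: (notin_closure b2 b1) => //; rewrite addrC.
Qed.

Lemma balanced_shifted_sum_mulrn (G : finZmodType) (C : {set G}) :
  C != set0 -> balanced C ->
  exists b0 a, [/\ b0 \in C, a \in C, a != b0 &
    forall k, exists2 X : {set G}, X \subset C & shifted_sum b0 X = (a - b0) *+ k].
Proof.
have [n] := ubnP #|C|; elim: n => // n IH in C *; rewrite ltnS => leCn C0 balC.
have /set0Pn[b0 b0C] := C0.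
have [sCS | /subsetPn[x xC xNS]] := boolP (C \subset avg_closure C b0).
  have [b1 [b2 [b1C b2C b12 _]]] := balC b0 b0C.
  have [a aC ab0] : exists2 a, a \in C & a != b0.
    case: (eqVneq b1 b0) => [eb1 | ?]; [exists b2 | exists b1] => //.
    by rewrite -eb1 eq_sym.
  by exists b0, a; split => // k; apply: shifted_sum_mulrn.
set Q := C :\: avg_closure C b0.
have sQC : Q \subset C by apply: subsetDl.
have ltQC : (#|Q| < n)%N.
  apply: leq_trans leCn; apply/proper_card/properP; split => //.
  by exists b0; rewrite // inE avg_closure_base.
have Q0 : Q != set0 by apply/set0Pn; exists x; rewrite inE xNS.
have [b0' [a [b0Q aQ ab0 mulQ]]] := IH Q ltQC Q0 (balanced_setD_avg_closure balC).
exists b0', a; split; rewrite ?(subsetP sQC) // => k.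
by have [X sXQ eX] := mulQ k; exists X; rewrite ?(subset_trans sXQ).
Qed.

Lemma Zp_unit_prime p (u : 'Z_p) : prime p -> u != 0 -> u \is a GRing.unit.
Proof.
move=> p_pr u0; have p_gt1 := prime_gt1 p_pr.
rewrite -(natr_Zp u) unitZpE // prime_coprime // gtnNdvd ?lt0n //.
by rewrite -[X in (_ < X)%N](Zp_cast p_gt1) ltn_ord.
Qed.

Lemma Zp_mulrn_prime p (u v : 'Z_p) : prime p -> u != 0 -> exists k, v = u *+ k.
Proof.
move=> p_pr u0; exists (nat_of_ord (u^-1 * v)).
by rewrite -mulr_natr natr_Zp mulVKr // Zp_unit_prime.
Qed.

Lemma sum_mem_subset_sums_setTr (G : finZmodType) (B X : {set G}) g :
  X \subset B -> \sum_(x in X) (x + g) \in subset_sums (setTr B g).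
Proof.
move=> sXB; apply/imsetP; exists (setTr X g); first by rewrite powersetE imsetS.
by rewrite big_imset //= => x y _ _ /addIr.
Qed.

Unset Implicit Arguments.

Theorem proposition4p3 (p : nat) (hp : prime p) (B : {set 'Z_p}) :
  B != set0 -> balanced B ->
  exists2 g, g \in setN B & subset_sums (setTr B g) = [set: 'Z_p].
Proof.
move=> B0 balB; have [b0 [a [b0B aB ab0 mulB]]] := balanced_shifted_sum_mulrn B0 balB.
exists (- b0); first exact: imset_f.
apply/eqP; rewrite eqEsubset subsetT; apply/subsetP => v _.
have [k ->] : exists k, v = (a - b0) *+ k by apply: Zp_mulrn_prime; rewrite ?subr_eq0.
have [X sXB <-] := mulB k; exact: sum_mem_subset_sums_setTr.
Qed.
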